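(* For any $n$-node graph $G$ and any $r\in\mathbb{N}$, the number of $r$-cycles in $G$ can be counted within $(r-1)\cdot\mathcal{O}(\log n)$ rounds of the $\mathsf{HYBRID}$ model.
   Context: Distributed setting: $n$ nodes with unique IDs in $\{1,\dots,n\}$; local communication graph $G$ undirected; each node initially knows only its neighbors' IDs; synchronous rounds, unlimited local computation. In the $\mathsf{HYBRID}$ model, in every round each node may send a message of arbitrary size to each neighbor (local mode) and may additionally send and receive $\mathcal{O}(\log n)$-bit messages to/from up to $\mathcal{O}(\log n)$ arbitrary nodes (global mode); excess messages are dropped arbitrarily. An $r$-cycle is a cycle of length $r$; counting means every node learns the total number of $r$-cycles in $G$. *)

From mathcomp Require Import all_boot.
Set Implicit Arguments. Unset Strict Implicit. Unset Printing Implicit Defensive.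

(* c * (log2 n + 1): the O(log n) quantity, for an explicit constant c. *)
Definition logO (c n : nat) : nat := c * (trunc_log 2 n).+1.

(* A global-mode message: (partner id, payload of [bits] bits). *)
Definition gmsg (n bits : nat) := ('I_n * 'I_(2 ^ bits))%type.

(* A deterministic HYBRID algorithm for n nodes (ids = 'I_n), with at most
   [cap] global messages sent per node per round, each of [bits] bits.
   Local state and local messages are of arbitrary type (unlimited local
   computation, arbitrary-size local messages). *)
Record hybrid_alg (n cap bits : nat) := HybridAlg {
  hSt : Type;
  hLMsg : Type;
  (* initial state from own id and the (sorted) list of neighbour ids *)
  h_init : 'I_n -> seq 'I_n -> hSt;
  h_lsend : hSt -> 'I_n -> hLMsg;
  (* global messages: (destination id, payload) *)
  h_gsend : hSt -> seq (gmsg n bits);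
  h_gsend_cap : forall s, size (h_gsend s) <= cap;
  (* transition: local messages received (sender id, msg) and global
     messages received (sender id, payload) *)
  h_step : hSt -> seq ('I_n * hLMsg) -> seq (gmsg n bits) -> hSt;
  h_out : hSt -> nat }.

(* Adversarial dropping of excess global messages: a node receiving more than
   [cap] global messages gets an arbitrary [cap] of them. *)
Definition valid_drop (n cap bits : nat)
    (adv : nat -> 'I_n -> seq (gmsg n bits) -> seq (gmsg n bits)) : Prop :=
  forall t v s, subseq (adv t v s) s /\ size (adv t v s) = minn cap (size s).

Definition nbrs n (e : rel 'I_n) (v : 'I_n) : seq 'I_n :=
  [seq u <- enum 'I_n | e v u].

Definition global_in n cap bits (A : hybrid_alg n cap bits)
    (cf : 'I_n -> hSt A) (v : 'I_n) : seq (gmsg n bits) :=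
  flatten [seq [seq (u, p.2) | p <- [seq p <- h_gsend (cf u) | p.1 == v]]
          | u <- enum 'I_n].

Fixpoint hconfig n cap bits (A : hybrid_alg n cap bits) (e : rel 'I_n)
    (adv : nat -> 'I_n -> seq (gmsg n bits) -> seq (gmsg n bits)) (t : nat)
    : 'I_n -> hSt A :=
  match t with
  | 0 => fun v => h_init A v (nbrs e v)
  | t'.+1 =>
      let cf := hconfig A e adv t' in
      fun v => h_step (cf v) [seq (u, h_lsend (cf u) v) | u <- nbrs e v]
                      (adv t' v (global_in cf v))
  end.

Definition is_rcycle n (e : rel 'I_n) (r : nat) (F : {set {set 'I_n}}) : bool :=
  (2 < r) &&
  [exists t : {ffun 'I_r -> 'I_n},
     [&& injectiveb t, [forall i, e (t i) (t (ordS i))]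
       & F == [set [set t i; t (ordS i)] | i : 'I_r]]].

Definition num_rcycles n (e : rel 'I_n) (r : nat) : nat :=
  #|[set F : {set {set 'I_n}} | is_rcycle e r F]|.

From mathcomp Require Import all_boot zify.
From Stdlib Require Import FunctionalExtensionality.
Set Implicit Arguments. Unset Strict Implicit. Unset Printing Implicit Defensive.

(* Every vertex of an r-cycle is within distance r - 1 of every other one, so after
   r - 1 rounds of flooding adjacency lists along local edges each node v knows enough
   of G to count the r-cycles whose least vertex is v; these counts add up to the
   number of r-cycles. The sum is then computed over the global network by pointer
   doubling on the ring 0, 1, ..., n - 1: in stage k node v receives from node v + 2^k
   the sum of the 2^k counts starting there, together with the sum of the first
   n mod 2^k of them, so after log n + 1 stages every node holds the total. Sums are
   kept modulo 2^(r (log n + 1)) > n^r, hence a pair of them fits into r - 1 messages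
   of O(log n) bits, and each stage takes r - 1 rounds. *)

Lemma modn_exp2S m k : m %% 2 ^ k.+1 = odd (m %/ 2 ^ k) * 2 ^ k + m %% 2 ^ k.
Proof.
have pow_gt0 : 0 < 2 ^ k by rewrite expn_gt0.
rewrite {1}(divn_eq m (2 ^ k)) {1}(divn_eq (m %/ 2 ^ k) 2) modn2 expnS mulnDl.
rewrite -mulnA [2 * _]mulnC -addnA modnMDl modn_small // muln2 -addnn.
have := ltn_pmod m pow_gt0.
by case: odd; rewrite ?mul1n ?mul0n ?add0n ?ltn_add2l // => /ltn_addr->.
Qed.

Lemma dvdn_succ m d : 0 < d -> (d %| m.+1) = ((m %% d).+1 == d).
Proof.
move=> d_gt0; rewrite /dvdn -addn1 -modnDml addn1.
have := ltn_pmod m d_gt0; rewrite leq_eqVlt => /orP[/eqP -> | lt_md].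
  by rewrite modnn !eqxx.
by rewrite modn_small // (ltn_eqF lt_md).
Qed.

Lemma divn_expS_digit m b j : m %/ b ^ j.+1 * b + m %/ b ^ j %% b = m %/ b ^ j.
Proof. by rewrite expnSr divnMA -divn_eq. Qed.

Lemma card_set_sum (T : finType) (P : pred T) : #|[set x | P x]| = \sum_x (P x : nat).
Proof. by rewrite -sum1dep_card big_mkcond; apply: eq_bigr => x _; case: (P x). Qed.

Lemma flatten_map_if (T U : Type) (p : pred T) (f : T -> U) s :
  flatten [seq if p x then [:: f x] else [::] | x <- s] = [seq f x | x <- s & p x].
Proof. by elim: s => //= x s ->; case: (p x). Qed.

Section RingShift.
Variable n : nat.

Lemma ord_gt0 (v : 'I_n) : 0 < n.
Proof. exact: leq_ltn_trans (leq0n v) (ltn_ord v). Qed.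

Definition ordD (v : 'I_n) (d : nat) : 'I_n := Ordinal (ltn_pmod (v + d) (ord_gt0 v)).

Lemma ordD0 v : ordD v 0 = v.
Proof. by apply: val_inj; rewrite /= addn0 modn_small. Qed.

Lemma ordDA v a b : ordD (ordD v a) b = ordD v (a + b).
Proof. by apply: val_inj; rewrite /= modnDml addnA. Qed.

Lemma ordDK a : cancel (ordD^~ a) (ordD^~ (n - a %% n)).
Proof.
move=> v; have n_gt0 := ord_gt0 v; apply: val_inj.
have a_le : a %% n <= n by apply/ltnW/ltn_pmod.
rewrite /= modnDml -addnA -modnDmr -[(a + _) %% n]modnDml subnKC //.
by rewrite modnn addn0 modn_small.
Qed.

Lemma ordKD a : cancel (ordD^~ (n - a %% n)) (ordD^~ a).
Proof.
move=> v; have n_gt0 := ord_gt0 v; apply: val_inj.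
have a_le : a %% n <= n by apply/ltnW/ltn_pmod.
rewrite /= modnDml -addnA -modnDmr -[(_ + a) %% n]modnDmr subnK //.
by rewrite modnn addn0 modn_small.
Qed.

Lemma sum_ordD_cat (x : 'I_n -> nat) v a b :
  \sum_(0 <= j < a + b) x (ordD v j)
  = \sum_(0 <= j < a) x (ordD v j) + \sum_(0 <= j < b) x (ordD (ordD v a) j).
Proof.
rewrite (@big_cat_nat _ _ _ a) ?leq_addr //=; congr (_ + _).
rewrite -{1}[a]add0n big_addn addKn; apply: eq_bigr => j _.
by rewrite ordDA addnC.
Qed.

Lemma sum_ordD (x : 'I_n -> nat) v : \sum_(0 <= j < n) x (ordD v j) = \sum_u x u.
Proof.
have ordD_inj : injective (fun j : 'I_n => ordD v j).
  move=> a b /(congr1 val) /= /eqP; rewrite eqn_modDl => /eqP.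
  by rewrite !modn_small // => /val_inj.
by rewrite big_mkord [RHS](reindex_inj ordD_inj).
Qed.

End RingShift.

Section RingSums.
Variables (n M : nat) (x : 'I_n -> nat).

Fixpoint block_sum k v : nat :=
  if k is k'.+1 then (block_sum k' v + block_sum k' (ordD v (2 ^ k'))) %% M
  else x v %% M.

Fixpoint prefix_sum k v : nat :=
  if k is k'.+1 then
    if odd (n %/ 2 ^ k') then (block_sum k' v + prefix_sum k' (ordD v (2 ^ k'))) %% M
    else prefix_sum k' v
  else 0.

Lemma block_sumE k v : block_sum k v = (\sum_(0 <= j < 2 ^ k) x (ordD v j)) %% M.
Proof.
elim: k v => [|k IHk] v /=; first by rewrite big_nat1 ordD0.
by rewrite !IHk modnDm expnS mul2n -addnn sum_ordD_cat.
Qed.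

Lemma prefix_sumE k v : prefix_sum k v = (\sum_(0 <= j < n %% 2 ^ k) x (ordD v j)) %% M.
Proof.
elim: k v => [|k IHk] v /=; first by rewrite expn0 modn1 big_geq ?mod0n.
rewrite modn_exp2S; case: odd; rewrite ?mul1n ?mul0n ?add0n //.
by rewrite IHk block_sumE modnDm sum_ordD_cat.
Qed.

Lemma block_sum_lt k v : 0 < M -> block_sum k v < M.
Proof. by case: k => [|k] /= M_gt0; apply: ltn_pmod. Qed.

Lemma prefix_sum_lt k v : 0 < M -> prefix_sum k v < M.
Proof. by move=> M_gt0; elim: k v => [|k IHk] v //=; case: odd => //; apply: ltn_pmod. Qed.

End RingSums.

(* What a node knows of G: the adjacency lists of some vertices, [None] elsewhere. *)
Local Notation view n := {ffun 'I_n -> option (seq 'I_n)}.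

Definition view_rel n (kn : view n) : rel 'I_n :=
  fun a b => b \in odflt [::] (kn a).

Definition view_merge n (kns : seq (view n)) : view n :=
  [ffun u => ohead (pmap (fun kn : view n => kn u) kns)].

Definition owner n (v : 'I_n) (F : {set {set 'I_n}}) : bool :=
  (v \in cover F) && [forall u in cover F, v <= u].

Definition owned_rcycles n (e : rel 'I_n) r v : nat :=
  #|[set F | is_rcycle e r F && owner v F]|.

Section Cycles.
Variables (n : nat) (e : rel 'I_n).

Lemma mem_nbrs a b : (b \in nbrs e a) = e a b.
Proof. by rewrite mem_filter mem_enum andbT. Qed.

Fixpoint reach t (v u : 'I_n) : bool :=
  if t is t'.+1 then reach t' v u || has (fun w => reach t' w u) (nbrs e v)
  else v == u.

Lemma reach_mono s t v u : s <= t -> reach s v u -> reach t v u.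
Proof. by move/subnK <-; elim: (t - s) => [|d IHd] //= /IHd ->. Qed.

Lemma iter_ordS r (j : 'I_r) k : val (iter k (@ordS r) j) = (j + k) %% r.
Proof.
elim: k => [|k IHk] /=; first by rewrite addn0 modn_small.
by rewrite IHk -addn1 modnDml -addnA addn1.
Qed.

Lemma reach_cycle r (c : 'I_r -> 'I_n) :
  (forall i, e (c i) (c (ordS i))) -> forall i j, reach (r - 1) (c j) (c i).
Proof.
move=> c_edge i j; have r_gt0 := ord_gt0 i.
have reach_iter k j' : reach k (c j') (c (iter k (@ordS r) j')).
  elim: k j' => [|k IHk] j' /=; first by rewrite eqxx.
  apply/orP; right; apply/hasP; exists (c (ordS j')); first by rewrite mem_nbrs.
  by rewrite -iterS iterSr.
set k := (i + (r - j)) %% r.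
have -> : i = iter k (@ordS r) j.
  apply: val_inj; rewrite iter_ordS /k modnDmr addnA addnC addnA subnK; last exact: ltnW.
  by rewrite addnC modnDr modn_small.
by apply: reach_mono (reach_iter k j); rewrite subn1 -ltnS prednK // ltn_pmod.
Qed.

Definition ball_view t v : view n :=
  [ffun u => if reach t v u then Some (nbrs e u) else None].

Lemma view_merge_ball m v :
  view_merge [seq ball_view m w | w <- v :: nbrs e v] = ball_view m.+1 v.
Proof.
apply/ffunP => u; rewrite !ffunE [reach m.+1 _ _]/=.
rewrite -[_ || _]/(has (reach m ^~ u) (v :: nbrs e v)).
elim: (v :: nbrs e v) => //= w s IHs; rewrite ffunE; case: reach => //=.
Qed.

Lemma view_rel_ball m v a b : view_rel (ball_view m v) a b = reach m v a && e a b.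
Proof. by rewrite /view_rel ffunE; case: reach => //=; rewrite mem_nbrs. Qed.

Lemma mem_cover_rcycle r (c : 'I_r -> 'I_n) v :
  v \in cover [set [set c i; c (ordS i)] | i : 'I_r] -> exists j, v = c j.
Proof. by case/bigcupP=> B /imsetP[i _ ->] /set2P[->|->]; eexists. Qed.

Lemma owned_rcycles_ball r v :
  owned_rcycles (view_rel (ball_view (r - 1) v)) r v = owned_rcycles e r v.
Proof.
apply: eq_card => F; rewrite !inE; case ownF: (owner v F); rewrite ?andbF ?andbT //.
apply: andb_id2l => _; apply: eq_existsb => c.
case: eqP => [defF|]; rewrite ?andbF // !andbT; congr (_ && _).
have [j ->] : exists j, v = c j by apply: mem_cover_rcycle; rewrite -defF; case/andP: ownF.
apply/forallP/forallP => c_edge i.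
  by have := c_edge i; rewrite view_rel_ball => /andP[].
by rewrite view_rel_ball c_edge andbT reach_cycle.
Qed.

Lemma owner_unique (F : {set {set 'I_n}}) a :
  a \in cover F -> exists m, forall v, owner v F = (v == m).
Proof.
move=> Fa; case: (arg_minnP (fun u : 'I_n => val u) Fa) => m Fm m_min.
exists m => // v; apply/andP/eqP => [[Fv /forall_inP v_min] | ->]; last first.
  by split=> //; apply/forall_inP => u /m_min.
by apply: val_inj; apply/eqP; rewrite eqn_leq v_min ?m_min.
Qed.

Lemma num_rcyclesE r : num_rcycles e r = \sum_v owned_rcycles e r v.
Proof.
rewrite /num_rcycles card_set_sum; under [RHS]eq_bigr => v _ do rewrite /owned_rcycles card_set_sum.
rewrite exchange_big /=; apply: eq_bigr => F _.
case cycF: (is_rcycle e r F) => /=; last by rewrite big1.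
have [a Fa] : exists a, a \in cover F.
  case/andP: cycF => r_gt2 /existsP[c /and3P[_ _ /eqP ->]].
  pose i0 := Ordinal (ltnW (ltnW r_gt2)).
  exists (c i0); apply/bigcupP; exists [set c i0; c (ordS i0)]; last exact: set21.
  exact: imset_f.
have [m ownerF] := owner_unique Fa.
by rewrite (bigD1 m) //= ownerF eqxx big1 // => u /negbTE; rewrite ownerF => ->.
Qed.

Lemma num_rcycles_le r : num_rcycles e r <= n ^ r.
Proof.
pose cycle_of (c : {ffun 'I_r -> 'I_n}) := [set [set c i; c (ordS i)] | i : 'I_r].
apply: (@leq_trans #|cycle_of @: setT|).
  apply/subset_leq_card/subsetP => F; rewrite inE.
  by case/andP=> _ /existsP[c /and3P[_ _ /eqP ->]]; apply: imset_f.
by rewrite (leq_trans (leq_imset_card _ _)) // cardsT card_ffun !card_ord.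
Qed.

End Cycles.

Lemma valid_drop_small n cap bits adv : valid_drop cap adv ->
  forall t (v : 'I_n) (s : seq (gmsg n bits)), size s <= cap -> adv t v s = s.
Proof.
move=> adv_ok t v s s_small; have [sub_s size_s] := adv_ok t v s.
by apply/eqP; rewrite -(size_subseq_leqif sub_s).2 size_s (minn_idPr s_small).
Qed.

Section Algorithm.
Variables (n r : nat).

Definition width := (trunc_log 2 n).+1.
Definition bits := logO 4 n.
Definition modulus := 2 ^ (r * width).
Definition base := 2 ^ bits.

(* Rounds 0, ..., r - 2 flood views and round r - 1 counts the owned cycles. Stage k of
   the doubling then occupies the r - 1 rounds starting at r + k (r - 1); in its slot i,
   node v + 2^k sends to v the i-th most significant base-[base] digit of its packed
   pair (block sum, prefix sum). *)
Definition stage t := (t - r) %/ (r - 1).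
Definition slot t := (t - r) %% (r - 1).
Definition active t := (r <= t) && (stage t < width).

Record state := State {
  s_id : 'I_n;
  s_time : nat;
  s_view : view n;
  s_block : nat;
  s_prefix : nat;
  s_acc : nat }.

Definition pack w a := w * modulus + a.

Lemma base_gt0 : 0 < base.
Proof. by rewrite expn_gt0. Qed.

Definition digit s : 'I_base :=
  let P := pack (s_block s) (s_prefix s) in
  Ordinal (ltn_pmod (P %/ base ^ (r - 2 - slot (s_time s))) base_gt0).

Definition gsend s : seq (gmsg n bits) :=
  if active (s_time s) then [:: (ordD (s_id s) (n - 2 ^ stage (s_time s) %% n), digit s)]
  else [::].

Lemma size_gsend s : size (gsend s) <= bits.
Proof. by rewrite /gsend; case: active. Qed.

Definition init v nb : state := State v 0 [ffun u => if u == v then Some nb else None] 0 0 0.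

Definition step s (ls : seq ('I_n * view n)) (gs : seq (gmsg n bits)) : state :=
  let: State v t kn w a acc := s in
  if t < r - 1 then State v t.+1 (view_merge (kn :: unzip2 ls)) w a acc
  else if t == r - 1 then State v t.+1 kn (owned_rcycles (view_rel kn) r v %% modulus) 0 0
  else if active t then
    let acc' := acc * base + (if gs is (_, d) :: _ then val d else 0) in
    if (slot t).+1 == r - 1 then
      State v t.+1 kn ((w + acc' %/ modulus) %% modulus)
        (if odd (n %/ 2 ^ stage t) then (w + acc' %% modulus) %% modulus else a) 0
    else State v t.+1 kn w a acc'
  else State v t.+1 kn w a acc.

Definition algorithm : hybrid_alg n bits bits :=
  @HybridAlg n bits bits state (view n) init (fun s _ => s_view s) gsend size_gsend step s_prefix.

Variable e : rel 'I_n.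
Local Notation count := (owned_rcycles e r).

Definition pair_at k u := pack (block_sum modulus count k u) (prefix_sum modulus count k u).

Definition state_at t v : state :=
  State v t (ball_view e (minn t (r - 1)) v)
    (if r <= t then block_sum modulus count (minn (stage t) width) v else 0)
    (if r <= t then prefix_sum modulus count (minn (stage t) width) v else 0)
    (if active t then pair_at (stage t) (ordD v (2 ^ stage t)) %/ base ^ (r - 1 - slot t)
     else 0).

Hypothesis r_gt1 : 1 < r.

Lemma modulus_gt0 : 0 < modulus.
Proof. by rewrite expn_gt0. Qed.

Lemma pack_lt w a : w < modulus -> a < modulus -> pack w a < base ^ (r - 1).
Proof.
move=> w_lt a_lt; apply: (@leq_trans (w.+1 * modulus)).
  by rewrite /pack mulSn addnC ltn_add2r.
apply: (@leq_trans (modulus * modulus)); first by rewrite leq_mul2r w_lt orbT.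
rewrite /modulus /base /bits /logO -expnD -expnM leq_pexp2l // -/width.
nia.
Qed.

Lemma pair_at_lt k u : pair_at k u < base ^ (r - 1).
Proof. by rewrite pack_lt ?block_sum_lt ?prefix_sum_lt ?modulus_gt0. Qed.

Lemma slot_lt t : slot t < r - 1.
Proof. by rewrite ltn_pmod // subn_gt0. Qed.

Lemma stageS t : r <= t ->
  stage t.+1 = if (slot t).+1 == r - 1 then (stage t).+1 else stage t.
Proof.
move=> r_le; rewrite /stage /slot subSn // divnS ?subn_gt0 // dvdn_succ ?subn_gt0 //.
by case: eqP.
Qed.

Lemma slotS t : r <= t -> slot t.+1 = if (slot t).+1 == r - 1 then 0 else (slot t).+1.
Proof. by move=> r_le; rewrite /slot subSn // modnS dvdn_succ ?subn_gt0. Qed.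

Lemma state_at0 v : init v (nbrs e v) = state_at 0 v.
Proof.
rewrite /state_at /active /= leqNgt (ltnW r_gt1) /=; congr State.
rewrite min0n; apply/ffunP => u; rewrite !ffunE /= eq_sym.
by case: eqP => // ->.
Qed.

Lemma step_flood t v gs : t < r - 1 ->
  step (state_at t v) [seq (u, s_view (state_at t u)) | u <- nbrs e v] gs = state_at t.+1 v.
Proof.
move=> t_lt; have [early earlyS] : (r <= t) = false /\ (r <= t.+1) = false by split; lia.
rewrite /state_at /active /= t_lt !early !earlyS (minn_idPl (ltnW t_lt)) (minn_idPl t_lt).
by rewrite /unzip2 -map_comp -view_merge_ball.
Qed.

Lemma step_count v ls gs : step (state_at (r - 1) v) ls gs = state_at (r - 1).+1 v.
Proof.
have r_pred : (r - 1).+1 = r by rewrite subn1 prednK // ltnW.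
rewrite r_pred /state_at /active /= ltnn eqxx leqnn minnn r_pred.
rewrite (minn_idPr (leq_subr 1 r)) /stage /slot subnn div0n mod0n subn0 min0n /=.
by rewrite owned_rcycles_ball divn_small // pair_at_lt.
Qed.

Lemma step_idle t v ls gs :
  r <= t -> ~~ active t -> step (state_at t v) ls gs = state_at t.+1 v.
Proof.
move=> r_le idle.
have width_le : width <= stage t by move: idle; rewrite /active r_le -leqNgt.
have width_leS : width <= stage t.+1 by rewrite (leq_trans width_le) // leq_div2r // leq_sub2r.
have idleS : active t.+1 = false by rewrite /active ltnNge width_leS andbF.
have [late late'] : (t < r - 1) = false /\ (t == r - 1) = false by split; lia.
rewrite /state_at /= late late' (negbTE idle) idleS r_le (leqW r_le).
have view_done : r - 1 <= t by rewrite (leq_trans (leq_subr 1 r)).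
rewrite (minn_idPr width_le) (minn_idPr width_leS).
by rewrite (minn_idPr view_done) (minn_idPr (leqW view_done)).
Qed.

Lemma step_receive t v ls u : active t ->
  step (state_at t v) ls [:: (u, digit (state_at t (ordD v (2 ^ stage t))))] = state_at t.+1 v.
Proof.
move=> act; have /andP[r_le k_lt] := act.
have [late late'] : (t < r - 1) = false /\ (t == r - 1) = false by split; lia.
have i_lt := slot_lt t.
have view_done : r - 1 <= t by rewrite (leq_trans (leq_subr 1 r)).
rewrite /state_at /= late late' act r_le (leqW r_le) (minn_idPr view_done).
rewrite (minn_idPr (leqW view_done)) /active (leqW r_le) (stageS r_le) (slotS r_le) /=.
set k := stage t in k_lt *; set i := slot t in i_lt *.
rewrite (minn_idPl (ltnW k_lt)) -[pack _ _]/(pair_at k _); set P := pair_at k _.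
rewrite (_ : r - 1 - i = (r - 2 - i).+1) ?divn_expS_digit; last lia.
have M_gt0 := modulus_gt0.
case: eqP => [last_digit | _]; last first.
  by rewrite (minn_idPl (ltnW k_lt)) k_lt (_ : r - 1 - i.+1 = r - 2 - i) //; lia.
rewrite (_ : r - 2 - i = 0) ?expn0 ?divn1; last lia.
have a_lt := prefix_sum_lt count k (ordD v (2 ^ k)) M_gt0.
rewrite /P /pair_at /pack divnMDl // modnMDl (divn_small a_lt) (modn_small a_lt) addn0.
rewrite (minn_idPl k_lt); congr State; case: ifP => // _.
by rewrite subn0 divn_small //; apply: pair_at_lt.
Qed.

Lemma final_round : r <= (r - 1) * bits /\ width <= stage ((r - 1) * bits).
Proof.
rewrite /stage leq_divRL ?subn_gt0 // /bits /logO -/width /width.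
by split; nia.
Qed.

Lemma num_rcycles_lt_modulus : num_rcycles e r < modulus.
Proof.
apply: leq_ltn_trans (num_rcycles_le e r) _.
by rewrite /modulus mulnC expnM ltn_exp2r ?trunc_log_ltn // ltnW.
Qed.

Lemma global_in_state_at t v : active t ->
  global_in (A := algorithm) (state_at t) v
  = [:: (ordD v (2 ^ stage t), digit (state_at t (ordD v (2 ^ stage t))))].
Proof.
move=> act; pose u0 := ordD v (2 ^ stage t).
rewrite /global_in (eq_map (g := fun u =>
  if u == u0 then [:: (u, digit (state_at t u))] else [::])).
  by rewrite flatten_map_if filter_pred1_uniq ?enum_uniq ?mem_enum.
move=> u; rewrite /= /gsend /= act /= (can2_eq (ordKD _) (ordDK _)).
by case: (u == u0).
Qed.

Lemma hconfig_state_at adv :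
  valid_drop bits adv -> forall t, hconfig algorithm e adv t = state_at t.
Proof.
move=> adv_ok; elim=> [|t IHt]; apply: functional_extensionality => v /=.
  exact: state_at0.
rewrite IHt.
have [t_lt | t_ge] := ltnP t (r - 1); first exact: step_flood.
have [-> | t_ne] := eqVneq t (r - 1); first exact: step_count.
have r_le : r <= t by lia.
have [act | idle] := boolP (active t); last exact: step_idle.
rewrite global_in_state_at // (valid_drop_small adv_ok) //; exact: step_receive.
Qed.

End Algorithm.

Theorem proposition36 :
  exists c : nat, 0 < c /\
  forall r n : nat,
  exists A : hybrid_alg n (logO c n) (logO c n),
  forall e : rel 'I_n, symmetric e -> irreflexive e ->
  forall adv, valid_drop (logO c n) adv ->
  forall v : 'I_n,
    h_out (hconfig A e adv ((r - 1) * logO c n) v) = num_rcycles e r.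
Proof.
exists 4; split => // r n; exists (algorithm n r) => e _ _ adv adv_ok v.
have [r_le1 | r_gt1] := leqP r 1.
  have -> : num_rcycles e r = 0.
    apply/eqP; rewrite cards_eq0; apply/eqP/setP => F.
    by rewrite !inE /is_rcycle ltnNge (leq_trans r_le1).
  by rewrite (_ : r - 1 = 0) ?mul0n //; apply/eqP; rewrite subn_eq0.
have [r_le_T width_le] := final_round n r_gt1.
rewrite (hconfig_state_at e r_gt1 adv_ok) /= r_le_T (minn_idPr width_le) prefix_sumE.
have n_lt : n < 2 ^ width n by apply: trunc_log_ltn.
rewrite (modn_small n_lt) sum_ordD -num_rcyclesE modn_small //.
exact: num_rcycles_lt_modulus.
Qed.
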